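(* Let $q^*$ be a fixed point of $S$ achieving the rate-distortion-perception function, and let $$M_{ij}=q^*(i)\sum_xp(x)\frac{A(x,i)A(x,j)}{\big(\sum_kq^*(k)A(x,k)\big)^2}.$$ Then every eigenvalue $\lambda$ of $M$ satisfies $\lambda\le1$.
   Context: Finite alphabets $\mathcal X=\hat{\mathcal X}$, source distribution $p$, distortion $d\ge0$, and multipliers $s_1,s_2\ge0$. $f:(0,\infty)\to\mathbb R$ is convex, twice differentiable, with $f(1)=0$, and $D_f(p\|q)=\sum_xq(x)f(p(x)/q(x))$. $S$ is the implicitly defined map $$S[q](i)=q(i)\sum_xp(x)\frac{A_q(x,i)}{\sum_kq(k)A_q(x,k)},\qquad A_q(x,i)=\exp\{-s_1d(x,i)-s_2[f(p(i)/S[q](i))-\tfrac{p(i)}{S[q](i)}f'(p(i)/S[q](i))]\},$$ and $A=A_{q^*}$. *)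

From mathcomp Require Import all_boot all_order all_algebra.
From mathcomp Require Import all_classical all_reals all_analysis.
From mathcomp Require Export complex.
Import GRing.Theory Num.Theory.

Set Implicit Arguments.
Unset Strict Implicit.
Unset Printing Implicit Defensive.

Local Open Scope ring_scope.

Section RDP.
Variables (R : realType) (n : nat).

(* The common finite alphabet X = Xhat is 'I_n. *)

Definition is_prob (v : 'I_n -> R) : Prop :=
  (forall i, 0 <= v i) /\ \sum_(i < n) v i = 1.

Definition convex_pos (f : R -> R) : Prop :=
  forall x y t : R, 0 < x -> 0 < y -> 0 <= t -> t <= 1 ->
    f (t * x + (1 - t) * y) <= t * f x + (1 - t) * f y.

Definition twice_derivable_pos (f : R -> R) : Prop :=
  forall x : R, 0 < x -> derivable f x 1 /\ derivable (derive1 f) x 1.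

Definition fdiv (f : R -> R) (p q : 'I_n -> R) : R :=
  \sum_(x < n) q x * f (p x / q x).

(* A_q(x,i) where the output distribution plugged in is r (r = S[q]).
   At a fixed point S[q] = q, so A = A_{q*} is obtained with r = q*. *)
Definition Afun (p : 'I_n -> R) (d : 'I_n -> 'I_n -> R) (f : R -> R)
    (s1 s2 : R) (r : 'I_n -> R) (x i : 'I_n) : R :=
  expR (- s1 * d x i
        - s2 * (f (p i / r i) - p i / r i * (derive1 f) (p i / r i))).

(* q is a fixed point of S: S[q] = q, i.e. the implicit defining equation
   of S holds with S[q] replaced by q. *)
Definition is_fixed_point_S (p : 'I_n -> R) (d : 'I_n -> 'I_n -> R)
    (f : R -> R) (s1 s2 : R) (q : 'I_n -> R) : Prop :=
  forall i : 'I_n,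
    q i = q i * \sum_(x < n) p x * Afun p d f s1 s2 q x i
                 / \sum_(k < n) q k * Afun p d f s1 s2 q x k.

Definition Mmat (p : 'I_n -> R) (d : 'I_n -> 'I_n -> R) (f : R -> R)
    (s1 s2 : R) (q : 'I_n -> R) : 'M[R]_n :=
  \matrix_(i < n, j < n)
    (q i * \sum_(x < n) p x * Afun p d f s1 s2 q x i * Afun p d f s1 s2 q x j
             / (\sum_(k < n) q k * Afun p d f s1 s2 q x k) ^+ 2).

Definition is_channel (W : 'I_n -> 'I_n -> R) : Prop :=
  forall x, is_prob (W x).

Definition out_dist (p : 'I_n -> R) (W : 'I_n -> 'I_n -> R) (y : 'I_n) : R :=
  \sum_(x < n) p x * W x y.

(* mutual information I(X; Xhat) (natural log; 0 ln 0 = 0 since the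
   factor W x y = 0 kills the term) *)
Definition mutual_info (p : 'I_n -> R) (W : 'I_n -> 'I_n -> R) : R :=
  \sum_(x < n) \sum_(y < n)
     p x * W x y * ln (W x y / out_dist p W y).

Definition exp_distortion (p : 'I_n -> R) (W : 'I_n -> 'I_n -> R)
    (d : 'I_n -> 'I_n -> R) : R :=
  \sum_(x < n) \sum_(y < n) p x * W x y * d x y.

Definition rdp_lagrangian (p : 'I_n -> R) (d : 'I_n -> 'I_n -> R)
    (f : R -> R) (s1 s2 : R) (W : 'I_n -> 'I_n -> R) : R :=
  mutual_info p W + s1 * exp_distortion p W d
  + s2 * fdiv f p (out_dist p W).

(* q achieves the RDP function (at multipliers s1, s2): q is the output
   distribution of an optimal test channel, i.e. one minimizing the
   Lagrangian over all test channels (whose output distribution is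
   positive, so that D_f(p || q_W) is defined). *)
Definition achieves_rdp (p : 'I_n -> R) (d : 'I_n -> 'I_n -> R)
    (f : R -> R) (s1 s2 : R) (q : 'I_n -> R) : Prop :=
  exists Wstar : 'I_n -> 'I_n -> R,
    [/\ is_channel Wstar,
        (forall y, out_dist p Wstar y = q y) &
        (forall W, is_channel W -> (forall y, 0 < out_dist p W y) ->
           rdp_lagrangian p d f s1 s2 Wstar <= rdp_lagrangian p d f s1 s2 W)].

End RDP.

From mathcomp Require Import all_boot all_order all_algebra.
From mathcomp Require Import all_classical all_reals all_analysis.
From mathcomp Require Import complex.
From mathcomp Require Import ring.
Import Order.TTheory GRing.Theory Num.Theory.

Set Implicit Arguments.
Unset Strict Implicit.
Unset Printing Implicit Defensive.

Local Open Scope ring_scope.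

(* Put a(x,i) = A(x,i) / sum_k q*(k) A(x,k).  Then M_ij = q*(i) sum_x p(x) a(x,i) a(x,j),
   sum_j q*(j) a(x,j) = 1, and the fixed-point equation says sum_x p(x) a(x,j) = 1.
   For a left eigenvector v M = lambda v, the means c(x) = sum_i q*(i) a(x,i) v(i)
   satisfy lambda sum_j q*(j) |v j|^2 = sum_x p(x) |c x|^2, and Jensen's inequality
   for |.|^2 bounds the right-hand side by sum_j q*(j) |v j|^2 > 0.  Hence lambda is
   real and lies in [0, 1]. *)

Section WeightedMean.
Variables (C : numClosedFieldType) (I : finType) (w : I -> C).
Hypotheses (w_ge0 : forall j, 0 <= w j) (w_sum1 : \sum_j w j = 1).

Lemma conj_wmean (V : I -> C) :
  (\sum_j w j * V j)^* = \sum_j w j * (V j)^*.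
Proof.
rewrite rmorph_sum; apply: eq_bigr => j _.
by rewrite rmorphM /= conj_Creal // ger0_real.
Qed.

Lemma sqr_normr_wmean_le (V : I -> C) :
  `|\sum_j w j * V j| ^+ 2 <= \sum_j w j * `|V j| ^+ 2.
Proof.
set c := \sum_j w j * V j.
have variance : \sum_j w j * `|V j - c| ^+ 2 = \sum_j w j * `|V j| ^+ 2 - `|c| ^+ 2.
  have expand j : w j * `|V j - c| ^+ 2 = w j * `|V j| ^+ 2
      - w j * V j * c^* - c * (w j * (V j)^*) + c * c^* * w j.
    by rewrite !normCK rmorphB /=; ring.
  rewrite (eq_bigr _ (fun j _ => expand j)) !big_split /= !sumrN.
  by rewrite -!mulr_suml -!mulr_sumr -conj_wmean -/c w_sum1 normCK; ring.
rewrite -subr_ge0 -variance.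
by apply: sumr_ge0 => j _; rewrite mulr_ge0 // exprn_ge0.
Qed.

End WeightedMean.

Lemma psumr_gt0 (F : numDomainType) (I : finType) (i0 : I) (G : I -> F) :
  (forall i, 0 < G i) -> 0 < \sum_i G i.
Proof.
by move=> G_gt0; rewrite (bigD1 i0) //= ltr_pwDl // sumr_ge0 // => i _; apply: ltW.
Qed.

Definition kernel_mx (S : pzSemiRingType) (X : finType) (n : nat)
    (p : X -> S) (q : 'I_n -> S) (a : X -> 'I_n -> S) : 'M[S]_n :=
  \matrix_(i, j) (q i * \sum_x p x * a x i * a x j).

Lemma map_kernel_mx (S T : pzSemiRingType) (f : {rmorphism S -> T}) (X : finType)
    (n : nat) (p : X -> S) (q : 'I_n -> S) (a : X -> 'I_n -> S) :
  map_mx f (kernel_mx p q a) = kernel_mx (f \o p) (f \o q) (fun x i => f (a x i)).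
Proof.
apply/matrixP => i j; rewrite !mxE rmorphM rmorph_sum /=.
by congr (_ * _); apply: eq_bigr => x _; rewrite !rmorphM.
Qed.

Section KernelEigenvalue.
Variables (C : numClosedFieldType) (X : finType) (n : nat).
Variables (p : X -> C) (q : 'I_n -> C) (a : X -> 'I_n -> C).
Hypotheses (p_ge0 : forall x, 0 <= p x) (q_gt0 : forall i, 0 < q i).
Hypotheses (a_ge0 : forall x i, 0 <= a x i).
Hypotheses (qa_sum1 : forall x, \sum_j q j * a x j = 1).
Hypotheses (pa_sum1 : forall j, \sum_x p x * a x j = 1).

Lemma qa_ge0 x i : 0 <= q i * a x i.
Proof. by rewrite mulr_ge0 // ltW. Qed.

Section LeftEigenvector.
Variables (v : 'rV[C]_n) (lambda : C).
Hypothesis v_eigen : v *m kernel_mx p q a = lambda *: v.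

Definition kernel_mean (x : X) : C := \sum_i q i * a x i * v 0 i.

Lemma kernel_eigen_mean j : \sum_x p x * a x j * kernel_mean x = lambda * v 0 j.
Proof.
move/rowP: v_eigen => /(_ j); rewrite !mxE => <-.
under eq_bigr => x _ do rewrite /kernel_mean mulr_sumr.
rewrite exchange_big /=; apply: eq_bigr => i _.
rewrite mxE mulr_sumr mulr_sumr; apply: eq_bigr => x _; ring.
Qed.

Lemma kernel_eigen_energy :
  lambda * \sum_j q j * `|v 0 j| ^+ 2 = \sum_x p x * `|kernel_mean x| ^+ 2.
Proof.
have pull j : lambda * (q j * `|v 0 j| ^+ 2) = q j * (lambda * v 0 j) * (v 0 j)^*.
  by rewrite normCK; ring.
rewrite mulr_sumr.
under eq_bigr => j _ do rewrite pull -kernel_eigen_mean mulr_sumr mulr_suml.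
rewrite exchange_big /=; apply: eq_bigr => x _.
rewrite normCK /kernel_mean.
rewrite (conj_wmean (fun i => qa_ge0 x i) (fun i => v 0 i)) !mulr_sumr.
by apply: eq_bigr => j _; ring.
Qed.

Lemma kernel_energy_le :
  \sum_x p x * `|kernel_mean x| ^+ 2 <= \sum_j q j * `|v 0 j| ^+ 2.
Proof.
have -> : \sum_j q j * `|v 0 j| ^+ 2 = \sum_x p x * \sum_j q j * a x j * `|v 0 j| ^+ 2.
  under [RHS]eq_bigr => x _ do rewrite mulr_sumr.
  rewrite exchange_big /=; apply: eq_bigr => j _.
  rewrite -[LHS]mulr1 -(pa_sum1 j) mulr_sumr; apply: eq_bigr => x _; ring.
apply: ler_sum => x _; apply: ler_wpM2l => //.
exact: (sqr_normr_wmean_le (qa_ge0 x) (qa_sum1 x)).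
Qed.

Lemma kernel_energy_gt0 : v != 0 -> 0 < \sum_j q j * `|v 0 j| ^+ 2.
Proof.
move=> v_neq0; have term_ge0 j : 0 <= q j * `|v 0 j| ^+ 2.
  by rewrite mulr_ge0 ?exprn_ge0 // ltW.
rewrite lt_def sumr_ge0 // andbT; apply/eqP => /psumr_eq0P energy0.
move/eqP: v_neq0; apply; apply/rowP => j; rewrite mxE.
apply/eqP; move: (energy0 (fun j _ => term_ge0 j) j isT) => /eqP.
by rewrite mulf_eq0 (gt_eqF (q_gt0 j)) sqrf_eq0 normr_eq0.
Qed.

End LeftEigenvector.

Lemma eigenvalue_kernel_mx_le1 lambda : eigenvalue (kernel_mx p q a) lambda -> lambda <= 1.
Proof.
case/eigenvalueP => v v_eigen v_neq0.
have S_gt0 := kernel_energy_gt0 v_neq0.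
have lambda_eq := kernel_eigen_energy v_eigen.
rewrite -(mulfK (lt0r_neq0 S_gt0) lambda) lambda_eq ler_pdivrMr // mul1r.
exact: kernel_energy_le.
Qed.

End KernelEigenvalue.

Lemma eigenvalue_complexified_kernel_mx_le1 (R : rcfType) (X : finType) (n : nat)
    (p : X -> R) (q : 'I_n -> R) (a : X -> 'I_n -> R) (lambda : R[i]) :
  (forall x, 0 <= p x) -> (forall i, 0 < q i) -> (forall x i, 0 <= a x i) ->
  (forall x, \sum_j q j * a x j = 1) -> (forall j, \sum_x p x * a x j = 1) ->
  eigenvalue (map_mx (real_complex R) (kernel_mx p q a)) lambda -> lambda <= 1.
Proof.
move=> p_ge0 q_gt0 a_ge0 qa_sum1 pa_sum1; rewrite map_kernel_mx.
have sum1_complexified (Y : finType) (G : Y -> R) :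
    \sum_y G y = 1 -> \sum_y (G y)%:C%C = 1.
  by move=> G_sum1; rewrite -rmorph_sum G_sum1.
apply: eigenvalue_kernel_mx_le1 => [x|i|x i|x|j] /=.
- by rewrite ler0c.
- by rewrite -(rmorph0 (real_complex R)) ltcR.
- by rewrite ler0c.
- by rewrite -(sum1_complexified _ _ (qa_sum1 x)); apply: eq_bigr => j _; rewrite rmorphM.
- by rewrite -(sum1_complexified _ _ (pa_sum1 j)); apply: eq_bigr => x _; rewrite rmorphM.
Qed.

Local Open Scope complex_scope.

Theorem lemma5 (R : realType) (n : nat)
    (p : 'I_n -> R) (d : 'I_n -> 'I_n -> R) (f : R -> R) (s1 s2 : R)
    (qstar : 'I_n -> R) :
  is_prob p -> (forall x, 0 < p x) ->
  (forall x y, 0 <= d x y) -> 0 <= s1 -> 0 <= s2 ->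
  convex_pos f -> twice_derivable_pos f -> f 1 = 0 ->
  is_prob qstar -> (forall i, 0 < qstar i) ->
  is_fixed_point_S p d f s1 s2 qstar ->
  achieves_rdp p d f s1 s2 qstar ->
  forall lambda : R[i],
    eigenvalue (map_mx (fun r : R => r%:C) (Mmat p d f s1 s2 qstar)) lambda ->
    lambda <= 1.
Proof.
move=> _ p_gt0 _ _ _ _ _ _ _ q_gt0 fixed _ lambda.
rewrite /is_fixed_point_S /Mmat in fixed *.
set A := Afun p d f s1 s2 qstar in fixed *.
pose Z x := \sum_k qstar k * A x k.
have A_gt0 x i : 0 < A x i by apply: expR_gt0.
have Z_gt0 x : 0 < Z x by apply: (psumr_gt0 x) => k; apply: mulr_gt0.
pose a x i := A x i / Z x.
have -> : \matrix_(i, j) (qstar i * \sum_x p x * A x i * A x j / Z x ^+ 2)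
    = kernel_mx p qstar a.
  apply/matrixP => i j; rewrite !mxE; congr (_ * _); apply: eq_bigr => x _.
  by rewrite /a; field; rewrite lt0r_neq0.
apply: eigenvalue_complexified_kernel_mx_le1 => [x|//|x i|x|j].
- exact: ltW.
- by rewrite divr_ge0 // ltW.
- rewrite /a; under eq_bigr do rewrite mulrA.
  by rewrite -mulr_suml -/(Z x) divff ?lt0r_neq0.
- rewrite /a; under eq_bigr do rewrite mulrA.
  by apply: (mulfI (lt0r_neq0 (q_gt0 j))); rewrite mulr1 -fixed.
Qed.
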